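(* Let $W=W(v_0;v_1,\dots,v_k)\subseteq K_n$ be a $k$-wheel with vertex set $V=V(W)\subseteq[1,n]$, and let $LT(W)$ be its leading tree. Then: (i) if $v_0=\min V$, then $\operatorname{val}_{LT(W)}(v_0)=k-1$; (ii) if $v_0=\max V$, then $\operatorname{val}_{LT(W)}(v_0)=1$; (iii) if $v_0\notin\{\min V,\max V\}$, then for all $i\in[1,k]$, $\operatorname{val}_{LT(W)}(v_i)=1$ if $v_i>v_0$ and $\operatorname{val}_{LT(W)}(v_i)=2$ if $v_i<v_0$. In this case, if $v_0$ is the $r$-th largest element of $V$ (so $r\in[2,k]$), then $\operatorname{val}_{LT(W)}(v_0)=r-1$.
   Context: For $k\ge 3$ and distinct vertices $v_0,\dots,v_k\in[1,n]$, the $k$-wheel $W(v_0;v_1,\dots,v_k)$ has radii $v_0v_i$ and chords $v_iv_{i+1}$ ($1\le i\le k$, $v_{k+1}=v_1$). A coupled tree of $W$ is a spanning tree $T\subseteq E(W)$ of $V(W)$ whose complement $E(W)\setminus T$ is also a spanning tree. Order the edges of $K_n$ totally by $12\succ13\succ\dots\succ1n\succ23\succ24\succ\dots\succ n{-}1\,n$ (for $a<b$, $c<d$: $ab\succ cd$ iff $a<c$, or $a=c$ and $b<d$). Extend to edge sets: $E\succ F$ iff $|E|>|F|$, or $|E|=|F|$ and the $\succ$-largest element of the symmetric difference $E\triangle F$ lies in $E$ (this is graded lexicographic order on the monomials $m_E$ with $m_{12}>m_{13}>\dots$). The leading tree $LT(W)$ is the $\succ$-largest coupled tree of $W$ (equivalently,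 the tree whose monomial is the leading term of the wheel's tree polynomial). $\operatorname{val}_T(v)$ is the number of edges of $T$ at $v$. *)

From mathcomp Require Import all_boot.
Set Implicit Arguments. Unset Strict Implicit. Unset Printing Implicit Defensive.

(* Vertices of K_n: the type 'I_n, where the ordinal i stands for the vertex
   i+1 of [1,n] (an order-preserving relabelling).  An edge {x,y} (x <> y) is
   stored as the normalized pair (min, max). *)

Section Wheel.
Variable n : nat.
Local Notation V := 'I_n.

Definition edge (x y : V) : V * V := if x < y then (x, y) else (y, x).

(* Wheel W(v0; v1..vk) with vs = [:: v1; ...; vk], k = size vs. *)
Definition wheel_vertices (v0 : V) (vs : seq V) : {set V} :=
  v0 |: [set v in vs].

Definition wheel_edges (v0 : V) (vs : seq V) : {set V * V} :=
  [set edge v0 v | v in vs] :|: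
  [set edge (nth v0 vs i) (nth v0 vs (i.+1 %% size vs)) | i : 'I_(size vs)].

Definition adj (T : {set V * V}) : rel V :=
  fun x y => (x != y) && (edge x y \in T).

Definition acyclic (T : {set V * V}) : Prop :=
  ~ exists s : seq V, [/\ 3 <= size s, uniq s & cycle (adj T) s].

Definition connected_on (U : {set V}) (T : {set V * V}) : Prop :=
  forall x y, x \in U -> y \in U -> connect (adj T) x y.

Definition spanning_tree (U : {set V}) (T : {set V * V}) : Prop :=
  [/\ (forall e, e \in T -> (e.1 \in U) && (e.2 \in U)),
      connected_on U T & acyclic T].

Definition coupled_tree (v0 : V) (vs : seq V) (T : {set V * V}) : Prop :=
  [/\ T \subset wheel_edges v0 vs,
      spanning_tree (wheel_vertices v0 vs) T &
      spanning_tree (wheel_vertices v0 vs) (wheel_edges v0 vs :\: T)].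

Definition edge_gt (e f : V * V) : bool :=
  (e.1 < f.1) || ((e.1 == f.1) && (e.2 < f.2)).

Definition eset_gt (E F : {set V * V}) : bool :=
  (#|F| < #|E|) ||
  ((#|E| == #|F|) && [exists e in E :\: F, forall f in F :\: E, edge_gt e f]).

Definition leading_tree (v0 : V) (vs : seq V) (T : {set V * V}) : Prop :=
  coupled_tree v0 vs T /\
  forall T', coupled_tree v0 vs T' -> T' != T -> eset_gt T T'.

Definition valency (T : {set V * V}) (v : V) : nat :=
  #|[set e in T | (e.1 == v) || (e.2 == v)]|.

End Wheel.

From mathcomp Require Import all_boot zify.

Set Implicit Arguments. Unset Strict Implicit. Unset Printing Implicit Defensive.

(* Neither a coupled tree T nor its complement can contain an arc of rim
   vertices together with all its radii and both boundary chords, since that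
   arc would be cut off from the hub in the other one.  Hence, for one of the
   two orientations of the rim, T contains exactly one edge of each pair
   {radius of v_(q+1), chord v_q v_(q+1)}: every rim vertex points either to
   the hub or to its predecessor, and both choices occur.  Conversely every
   such non-constant choice is a coupled tree, and all of them have k edges.
   Switching the choice of one rim vertex y trades edge y v_0 for edge y v_q,
   and the latter is larger iff v_q < v_0; so the leading tree takes v_q as a
   parent exactly when v_q < v_0, except where that would make the choice
   constant.  A rim vertex then has valency 1 plus its number of children, and
   the hub has valency the number of radii. *)

Lemma next_neq_prev (T : eqType) (s : seq T) x : uniq s -> 2 < size s -> x \in s ->
  next s x != prev s x.
Proof.
move=> us sz /rot_to [i p rot_s]; apply/eqP => E.
have us' : uniq (x :: p) by rewrite -rot_s rot_uniq.
have sz' : 2 < size (x :: p) by rewrite -rot_s size_rot.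
have : next s (next s x) = x by rewrite {1}E next_prev.
rewrite -!(next_rot i us) rot_s {rot_s}.
case: p us' sz' => [|y [|z p]] //= us' _; rewrite eqxx.
case: (y =P x) => [yx | _]; first by move: us'; rewrite yx inE eqxx.
by rewrite eqxx => zx; move: us'; rewrite zx !inE eqxx orbT.
Qed.

Section Edges.
Variable n : nat.
Implicit Types (x y a b : 'I_n) (e f : 'I_n * 'I_n) (E F G : {set 'I_n * 'I_n}).

Lemma edgeC x y : edge x y = edge y x.
Proof. by rewrite /edge; case: (ltngtP x y) => // /val_inj ->. Qed.

Lemma edge_eqP x y x' y' : edge x y = edge x' y' ->
  (x = x' /\ y = y') \/ (x = y' /\ y = x').
Proof. by rewrite /edge; do 2 case: ifP => _; case=> -> ->; auto. Qed.

Lemma edge_end x y v :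
  ((edge x y).1 == v) || ((edge x y).2 == v) = (x == v) || (y == v).
Proof. by rewrite /edge; case: ifP => //= _; rewrite orbC. Qed.

Lemma edge_ends_in (A : {pred 'I_n}) x y : x \in A -> y \in A ->
  ((edge x y).1 \in A) && ((edge x y).2 \in A).
Proof. by move=> xA yA; rewrite /edge; case: ifP => _ /=; rewrite xA yA. Qed.

Lemma adj_sym G : symmetric (adj G).
Proof. by move=> x y; rewrite /adj eq_sym edgeC. Qed.

Definition edge_rank e := e.1 * n + e.2.

Lemma edge_gtE e f : edge_gt e f = (edge_rank e < edge_rank f).
Proof.
case: e f => [a1 a2] [b1 b2]; rewrite /edge_gt /edge_rank /= -(inj_eq (@ord_inj n)).
have := ltn_ord a2; have := ltn_ord b2.
move: (a1 : nat) (a2 : nat) (b1 : nat) (b2 : nat) => x1 x2 y1 y2 lt1 lt2.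
case: (ltngtP x1 y1) => [lt_x | lt_y | eq_xy] /=.
- have : x1.+1 * n <= y1 * n by rewrite leq_mul2r lt_x orbT.
  by rewrite mulSn => ?; apply/esym; lia.
- have : y1.+1 * n <= x1 * n by rewrite leq_mul2r lt_y orbT.
  by rewrite mulSn => ?; apply/esym/negbTE; rewrite -leqNgt; lia.
- by rewrite eq_xy ltn_add2l.
Qed.

Lemma eset_gt_asym E F : eset_gt E F -> ~~ eset_gt F E.
Proof.
rewrite /eset_gt => /orP [lt_FE | /andP [/eqP cardE /existsP [e /andP [eEF maxe]]]].
  by rewrite negb_or -leqNgt ltnW //= (ltn_eqF lt_FE).
rewrite cardE ltnn eqxx /=; apply/existsP => -[f /andP [fFE maxf]].
have := forallP maxe f; rewrite fFE /= edge_gtE => lt_ef.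
have := forallP maxf e; rewrite eEF /= edge_gtE => lt_fe.
by move: (ltn_trans lt_ef lt_fe); rewrite ltnn.
Qed.

Lemma edge_gt_common_end y a b :
  a < b -> y != a -> y != b -> edge_gt (edge y a) (edge y b).
Proof.
move=> ab; rewrite /edge_gt /edge -!(inj_eq (@ord_inj n)) => ya yb.
by case: ifP => lt_ya; case: ifP => lt_yb /=; rewrite -?(inj_eq (@ord_inj n)) /=; lia.
Qed.

End Edges.

Lemma modnD_eq d p i j : i = j %[mod d] -> i + p = j + p %[mod d].
Proof. by move=> E; rewrite -modnDml E modnDml. Qed.

Lemma modnD_eqK d p i j : i + p = j + p %[mod d] -> i = j %[mod d].
Proof. by move/eqP; rewrite eqn_modDr => /eqP. Qed.

Lemma modnS_eq d i j : i = j %[mod d] -> i.+1 = j.+1 %[mod d].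
Proof. by rewrite -[i.+1]addn1 -[j.+1]addn1; apply: modnD_eq. Qed.

Lemma modnD_neq d p i : 0 < p < d -> i + p != i %[mod d].
Proof. by case/andP=> p0 pd; rewrite -{2}[i]addn0 eqn_modDl mod0n modn_small // -lt0n. Qed.

Section Wheel.
Variables (n : nat) (h : 'I_n) (vs : seq 'I_n).
Hypothesis size_vs : 3 <= size vs.
Hypothesis uniq_wheel : uniq (h :: vs).

Local Notation k := (size vs).
Local Notation W := (wheel_edges h vs).
Local Notation U := (wheel_vertices h vs).
Implicit Types (G : {set 'I_n * 'I_n}) (i j p q : nat).

(* Rim vertices are indexed cyclically: [vtx i] is v_(i mod k + 1). *)
Definition vtx i : 'I_n := nth h vs (i %% k).
Definition radius i := edge h (vtx i).
Definition chord i := edge (vtx i) (vtx i.+1).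

Lemma k_gt0 : 0 < k. Proof. exact: leq_trans size_vs. Qed.

Lemma modn_predS i : (i + k.-1).+1 = i %[mod k].
Proof. by rewrite -addnS prednK ?k_gt0 // modnDr. Qed.

Lemma vtx_in i : vtx i \in vs. Proof. by rewrite mem_nth // ltn_pmod // k_gt0. Qed.

Lemma vtx_hubF i : (vtx i == h) = false.
Proof. by case/andP: uniq_wheel => h_vs _; apply: contraNF h_vs => /eqP <-; exact: vtx_in. Qed.

Lemma vtx_wheel i : vtx i \in U. Proof. by rewrite !inE vtx_in orbT. Qed.
Lemma hub_wheel : h \in U. Proof. by rewrite !inE eqxx. Qed.

Lemma vtx_mod i j : i = j %[mod k] -> vtx i = vtx j. Proof. by rewrite /vtx => ->. Qed.

Lemma vtx_inj i j : vtx i = vtx j -> i = j %[mod k].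
Proof.
case/andP: uniq_wheel => _ uvs.
by move/eqP; rewrite /vtx nth_uniq ?ltn_pmod ?k_gt0 // => /eqP.
Qed.

Lemma vtx_predS i : vtx (i + k.-1).+1 = vtx i.
Proof. exact/vtx_mod/modn_predS. Qed.

Lemma vsP v : v \in vs -> exists2 i, i < k & v = vtx i.
Proof.
move=> vV; exists (index v vs); first by rewrite index_mem.
by rewrite /vtx modn_small ?index_mem // nth_index.
Qed.

Lemma wheelP x : x \in U -> x = h \/ exists2 p, p < k & x = vtx p.
Proof. by rewrite !inE => /orP [/eqP ->|/vsP]; auto. Qed.

Lemma radius_mod i j : i = j %[mod k] -> radius i = radius j.
Proof. by move=> E; rewrite /radius (vtx_mod E). Qed.

Lemma chord_mod i j : i = j %[mod k] -> chord i = chord j.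
Proof. by move=> E; rewrite /chord (vtx_mod E) (vtx_mod (modnS_eq E)). Qed.

Lemma chord_pred_succ i : chord (i.+1 + k.-1) = chord i.
Proof. by rewrite addSn; apply/chord_mod/modn_predS. Qed.

Lemma radius_inj i j : radius i = radius j -> i = j %[mod k].
Proof. by case/edge_eqP=> [[_ /vtx_inj] //|[E _]]; move: (vtx_hubF j); rewrite -E eqxx. Qed.

Lemma chord_neq_radius i j : chord i <> radius j.
Proof.
by case/edge_eqP=> [[E _]|[_ E]]; [move: (vtx_hubF i)|move: (vtx_hubF i.+1)]; rewrite E eqxx.
Qed.

Lemma chord_inj i j : chord i = chord j -> i = j %[mod k].
Proof.
case/edge_eqP=> [[/vtx_inj //]|[/vtx_inj E1 /vtx_inj E2]].
have : i + 2 = i %[mod k] by rewrite addn2 E1; apply: modnS_eq; rewrite -E2.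
by move/eqP; rewrite (negbTE (modnD_neq _ _)) // size_vs.
Qed.

Lemma radius_wheel i : radius i \in W.
Proof. by rewrite inE; apply/orP; left; apply/imsetP; exists (vtx i); rewrite ?vtx_in. Qed.

Lemma chord_wheel i : chord i \in W.
Proof.
rewrite inE; apply/orP; right; apply/imsetP.
exists (Ordinal (ltn_pmod i k_gt0)) => //=.
by rewrite /chord /vtx -[i.+1]addn1 -modnDml addn1.
Qed.

Lemma wheel_edgeP e : e \in W -> exists2 i, i < k & (e = radius i \/ e = chord i).
Proof.
case/setUP => /imsetP [x x_in ->].
  by have [i ik ->] := vsP x_in; exists i => //; left.
by exists x => //; right; rewrite /chord /vtx (modn_small (ltn_ord x)).
Qed.

Lemma adj_vtx G p w : G \subset W -> adj G (vtx p) w ->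
  [\/ w = h /\ radius p \in G, w = vtx p.+1 /\ chord p \in G |
      w = vtx (p + k.-1) /\ chord (p + k.-1) \in G].
Proof.
move=> sGW /andP [_ eG]; have [i _ [E|E]] := wheel_edgeP (subsetP sGW _ eG);
  rewrite E in eG.
- case/edge_eqP: E => [[E1 _]|[E1 E2]]; first by move: (vtx_hubF p); rewrite E1 eqxx.
  by constructor 1; rewrite E2 (radius_mod (vtx_inj E1)).
- case/edge_eqP: E => [[/vtx_inj E1 E2]|[E1 E2]].
    by constructor 2; rewrite E2 (vtx_mod (modnS_eq E1)) (chord_mod E1).
  have E3 : i = p + k.-1 %[mod k].
    by apply: (@modnD_eqK _ 1); rewrite !addn1 modn_predS (vtx_inj E1).
  by constructor 3; rewrite E2 (vtx_mod E3) -(chord_mod E3).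
Qed.

Lemma adj_hub G w : G \subset W -> adj G h w ->
  exists2 i, i < k & w = vtx i /\ radius i \in G.
Proof.
move=> sGW /andP [_ eG]; have [i ik [E|E]] := wheel_edgeP (subsetP sGW _ eG);
  rewrite E in eG.
- case/edge_eqP: E => [[_ ->]|[E1 _]]; first by exists i.
  by move: (vtx_hubF i); rewrite -E1 eqxx.
- by case/edge_eqP: E => [[E1 _]|[E1 _]]; [move: (vtx_hubF i)|move: (vtx_hubF i.+1)];
    rewrite -E1 eqxx.
Qed.

(* An arc of rim vertices whose radii and two boundary chords all lie outside
   [G] is a union of components of [G] that misses the hub. *)
Lemma arc_disconnected G i L : G \subset W -> connected_on U G ->
  chord (i + k.-1) \notin G -> chord (i + L) \notin G ->
  (forall m, m <= L -> radius (i + m) \notin G) -> False.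
Proof.
move=> sGW conG first_out last_out radii_out.
pose A := [pred v | [exists m : 'I_L.+1, v == vtx (i + m)]].
have closedA : closed (adj G) A.
  apply: intro_closed; first exact/sym_connect_sym/adj_sym.
  move=> u w adj_uw /existsP [m /eqP u_m]; rewrite u_m in adj_uw.
  case/(adj_vtx sGW): adj_uw => [[_ rG]|[-> cG]|[-> cG]].
  - by move: (radii_out m); rewrite rG -ltnS ltn_ord => /(_ isT).
  - have mL : m < L.
      rewrite ltn_neqAle -ltnS ltn_ord andbT; apply/eqP => mL.
      by move: cG; rewrite mL (negbTE last_out).
    by apply/existsP; exists (Ordinal (mL : m.+1 < L.+1)); rewrite /= addnS.
  - have m0 : 0 < m by rewrite lt0n; apply: contraTneq cG => ->; rewrite addn0.
    have mL : m.-1 < L.+1 by have := ltn_ord m; lia.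
    apply/existsP; exists (Ordinal mL); apply/eqP/vtx_mod => /=.
    by rewrite -[in LHS](prednK m0) addnS -addSn modn_predS.
have := closed_connect closedA (conG _ _ (vtx_wheel i) hub_wheel).
have -> : vtx i \in A by apply/existsP; exists ord0; rewrite addn0.
by move/esym/existsP => -[m /eqP E]; move: (vtx_hubF (i + m)); rewrite -E eqxx.
Qed.

Lemma connected_radius G : G \subset W -> connected_on U G ->
  exists2 i, i < k & radius i \in G.
Proof.
move=> sGW conG; have := conG h (vtx 0) hub_wheel (vtx_wheel 0).
case/connectP => [[|w p] /= path_p E]; first by move: (vtx_hubF 0); rewrite -E eqxx.
by case/andP: path_p => /(adj_hub sGW) [i ik [_ ?]] _; exists i.
Qed.

(* With orientation [dir], the rim vertex [vtx (child dir q)] is the neighbour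
   of [vtx q] across the chord [chord (child_chord dir q)]. *)
Definition child (dir : bool) q := if dir then q.+1 else q + k.-1.
Definition child_chord (dir : bool) q := if dir then q else q + k.-1.

Lemma child_mod dir i j : i = j %[mod k] -> child dir i = child dir j %[mod k].
Proof. by case: dir => /= E; [apply: modnS_eq | apply: modnD_eq]. Qed.

Lemma child_chord_mod dir i j :
  i = j %[mod k] -> child_chord dir i = child_chord dir j %[mod k].
Proof. by case: dir => /= E //; apply: modnD_eq. Qed.

Lemma child_modK dir i j : child dir i = child dir j %[mod k] -> i = j %[mod k].
Proof.
case: dir => /= E; last exact: modnD_eqK E.
by apply: (@modnD_eqK _ 1); rewrite !addn1.
Qed.

Lemma child_chord_modK dir i j :
  child_chord dir i = child_chord dir j %[mod k] -> i = j %[mod k].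
Proof. by case: dir => /= E //; exact: modnD_eqK E. Qed.

Lemma child_neq dir q : child dir q != q %[mod k].
Proof. by case: dir; rewrite /= -?[q.+1]addn1; apply: modnD_neq; have := size_vs; lia. Qed.

Lemma chord_child_chord dir q : chord (child_chord dir q) = edge (vtx (child dir q)) (vtx q).
Proof. by case: dir; rewrite /chord /= ?vtx_predS // edgeC. Qed.

Definition parent (D : nat -> bool) q := if D (q %% k) then vtx q else h.

(* Every rim vertex [vtx (child dir q)] keeps one edge, towards [parent D q]. *)
Definition tree_edge dir D q :=
  if D (q %% k) then chord (child_chord dir q) else radius (child dir q).

Definition pointer_tree dir D := [set tree_edge dir D i | i : 'I_k].

Lemma tree_edgeE dir D q : tree_edge dir D q = edge (vtx (child dir q)) (parent D q).
Proof.
by rewrite /tree_edge /parent; case: ifP => _; [exact: chord_child_chord | exact: edgeC].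
Qed.

Lemma tree_edge_mod dir D q : tree_edge dir D (q %% k) = tree_edge dir D q.
Proof.
rewrite /tree_edge modn_mod; case: ifP => _;
  [apply/chord_mod/child_chord_mod | apply/radius_mod/child_mod]; exact: modn_mod.
Qed.

Lemma tree_edge_in dir D q : tree_edge dir D q \in pointer_tree dir D.
Proof. by apply/imsetP; exists (Ordinal (ltn_pmod q k_gt0)); rewrite //= tree_edge_mod. Qed.

Lemma pointer_treeP dir D e :
  e \in pointer_tree dir D -> exists2 q, q < k & e = tree_edge dir D q.
Proof. by case/imsetP => q _ ->; exists q. Qed.

Lemma tree_edge_wheel dir D q : tree_edge dir D q \in W.
Proof. by rewrite /tree_edge; case: ifP => _; [exact: chord_wheel | exact: radius_wheel]. Qed.

Lemma pointer_tree_sub dir D : pointer_tree dir D \subset W.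
Proof. by apply/subsetP => e /pointer_treeP [q _ ->]; exact: tree_edge_wheel. Qed.

Lemma tree_edge_inj dir D D' q q' : q < k -> q' < k ->
  tree_edge dir D q = tree_edge dir D' q' -> q = q' /\ D q = D' q'.
Proof.
move=> qk qk'; rewrite /tree_edge !modn_small //.
case: (D q); case: (D' q') => E.
- by move/chord_inj/child_chord_modK: E; rewrite !modn_small.
- by case: (chord_neq_radius E).
- by case: (chord_neq_radius (esym E)).
- by move/radius_inj/child_modK: E; rewrite !modn_small.
Qed.

Lemma card_pointer_tree dir D : #|pointer_tree dir D| = k.
Proof.
rewrite card_imset ?card_ord // => i j /(tree_edge_inj (ltn_ord i) (ltn_ord j)) [E _].
exact: val_inj.
Qed.


(* The wheel edges are partitioned into the [k] pairs
   [{radius (child dir q), chord (child_chord dir q)}], [q < k]. *)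
Definition pair_of_radius dir i := child (~~ dir) i %% k.
Definition pair_of_chord (dir : bool) i := (if dir then i else i.+1) %% k.

Lemma pair_of_radius_lt dir i : pair_of_radius dir i < k.
Proof. exact: ltn_pmod k_gt0. Qed.

Lemma pair_of_chord_lt dir i : pair_of_chord dir i < k.
Proof. exact: ltn_pmod k_gt0. Qed.

Lemma child_pair_of_radius dir i : child dir (pair_of_radius dir i) = i %[mod k].
Proof.
case: dir; rewrite /pair_of_radius /=.
- exact: etrans (modnS_eq (modn_mod _ _)) (modn_predS i).
- by rewrite modnDml addSn modn_predS.
Qed.

Lemma child_chord_pair_of_chord dir i : child_chord dir (pair_of_chord dir i) = i %[mod k].
Proof. by case: dir; rewrite /pair_of_chord /= ?modn_mod // modnDml addSn modn_predS. Qed.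

Lemma chord_pointer_tree dir D i : (chord i \in pointer_tree dir D) = D (pair_of_chord dir i).
Proof.
have pk := pair_of_chord_lt dir i.
apply/idP/idP => [/pointer_treeP [q qk] | D_i].
- rewrite /tree_edge (modn_small qk); case: ifP => // D_q; last by case/chord_neq_radius.
  move/chord_inj; rewrite -(child_chord_pair_of_chord dir) => /child_chord_modK.
  by rewrite !modn_small // => ->.
- have := tree_edge_in dir D (pair_of_chord dir i).
  by rewrite /tree_edge modn_small // D_i (chord_mod (child_chord_pair_of_chord dir i)).
Qed.

Lemma radius_pointer_tree dir D i :
  (radius i \in pointer_tree dir D) = ~~ D (pair_of_radius dir i).
Proof.
have pk := pair_of_radius_lt dir i.
apply/idP/idP => [/pointer_treeP [q qk] | D_i].
- rewrite /tree_edge (modn_small qk); case: ifP => D_q; first by case/esym/chord_neq_radius.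
  move/radius_inj; rewrite -(child_pair_of_radius dir) => /child_modK.
  by rewrite !modn_small // => ->; rewrite D_q.
- have := tree_edge_in dir D (pair_of_radius dir i).
  by rewrite /tree_edge modn_small // (negbTE D_i) (radius_mod (child_pair_of_radius dir i)).
Qed.

Lemma edges_at_vtx p e : e \in W ->
  (e.1 == vtx p) || (e.2 == vtx p) = (e \in [:: radius p; chord p; chord (p + k.-1)]).
Proof.
case/wheel_edgeP => i _ [->|->]; rewrite edge_end !inE.
- rewrite eq_sym vtx_hubF /=; apply/eqP/idP => [/vtx_inj/radius_mod -> | ]; first by rewrite eqxx.
  case/or3P => /eqP; [by move/radius_inj/vtx_mod | by case/esym/chord_neq_radius |
    by case/esym/chord_neq_radius].
- apply/orP/idP => [[] /eqP/vtx_inj E | ].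
  + by rewrite (chord_mod E) eqxx orbT.
  + have E' : i = p + k.-1 %[mod k] by apply: (@modnD_eqK _ 1); rewrite !addn1 modn_predS.
    by rewrite (chord_mod E') eqxx !orbT.
  + case/or3P => /eqP; first by case/chord_neq_radius.
      by move/chord_inj/vtx_mod => ->; left.
    by move/chord_inj => E; right; rewrite (vtx_mod (modnS_eq E)) vtx_predS.
Qed.

Lemma uniq_edges_at_vtx p : uniq [:: radius p; chord p; chord (p + k.-1)].
Proof.
rewrite /= !inE !negb_or andbT -andbA; apply/and3P; split;
  try by apply/eqP => /esym/chord_neq_radius.
by apply/eqP => /chord_inj /eqP; rewrite eq_sym (negbTE (modnD_neq _ _)) //; have := size_vs; lia.
Qed.

Lemma valency_vtx G p : G \subset W ->
  valency G (vtx p) = (radius p \in G) + (chord p \in G) + (chord (p + k.-1) \in G).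
Proof.
move=> sGW; rewrite /valency.
have -> : [set e in G | (e.1 == vtx p) || (e.2 == vtx p)] =
    [set e in [seq e <- [:: radius p; chord p; chord (p + k.-1)] | e \in G]].
  apply/setP => e; rewrite !inE mem_filter.
  by case eG: (e \in G) => //=; exact: edges_at_vtx (subsetP sGW e eG).
rewrite cardsE (card_uniqP _); last exact: filter_uniq (uniq_edges_at_vtx p).
by rewrite size_filter /= addn0 addnA.
Qed.

Lemma valency_vtx_pointer_tree dir D p :
  valency (pointer_tree dir D) (vtx p) = (D (p %% k)).+1.
Proof.
rewrite valency_vtx ?pointer_tree_sub // radius_pointer_tree !chord_pointer_tree.
rewrite /pair_of_radius /pair_of_chord; case: dir => /=.
- by case: (D ((p + k.-1) %% k)); case: (D (p %% k)).
- by rewrite modn_predS; case: (D (p.+1 %% k)); case: (D (p %% k)).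
Qed.

Lemma valency_hub_pointer_tree dir D :
  valency (pointer_tree dir D) h = #|[set q : 'I_k | ~~ D q]|.
Proof.
have hub_edges : [set e in pointer_tree dir D | (e.1 == h) || (e.2 == h)] =
    [set tree_edge dir D (nat_of_ord q) | q in [set q : 'I_k | ~~ D q]].
  apply/setP => e; rewrite inE; apply/idP/imsetP => [/andP [/imsetP [q _ ->]] | [q]].
  - rewrite tree_edgeE edge_end vtx_hubF /= /parent modn_small //.
    case: ifP => D_q; rewrite ?vtx_hubF // => _.
    by exists q; rewrite ?inE ?D_q // tree_edgeE /parent modn_small // D_q.
  - rewrite inE => D_q ->; rewrite tree_edge_in tree_edgeE edge_end /parent.
    by rewrite modn_small // (negbTE D_q) eqxx orbT.
rewrite /valency hub_edges card_in_imset //.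
by move=> i j _ _ /(tree_edge_inj (ltn_ord i) (ltn_ord j)) [E _]; exact: val_inj.
Qed.

Lemma pointer_tree_compl dir D :
  W :\: pointer_tree dir D = pointer_tree dir (fun q => ~~ D q).
Proof.
apply/setP => e; rewrite in_setD; apply/andP/idP => [[e_out eW] | /pointer_treeP [q qk ->]].
- move: e_out; have [i _ [->|->]] := wheel_edgeP eW.
  + by rewrite !radius_pointer_tree; case: (D _).
  + by rewrite !chord_pointer_tree.
- split; last exact: tree_edge_wheel.
  apply/negP => /pointer_treeP [q' qk' /esym/(tree_edge_inj qk' qk) [-> /=]].
  by case: (D q).
Qed.

Lemma iter_child dir j m : iter m (child dir) j = if dir then j + m else j + m * k.-1.
Proof.
elim: m => [|m IH] /=; first by case: dir; rewrite ?addn0 ?mul0n ?addn0.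
by rewrite IH; case: dir {IH} => /=; rewrite ?addnS // mulSn [k.-1 + _]addnC addnA.
Qed.

Lemma vtx_iter_child dir j p : j < k -> p < k ->
  exists d, vtx (iter d.+1 (child dir) j) = vtx p.
Proof.
move=> jk pk; case: dir.
- exists (p + k - j).-1; rewrite iter_child; apply: vtx_mod.
  have -> : j + (p + k - j).-1.+1 = p + k by lia.
  exact: modnDr.
- exists (j + k - p).-1; rewrite iter_child; apply: vtx_mod.
  set m := (j + k - p).-1.+1; apply: (@modnD_eqK _ m).
  rewrite -addnA -mulnSr prednK ?k_gt0 // addnC modnMDl.
  have -> : p + m = j + k by rewrite /m; lia.
  by rewrite modnDr.
Qed.

Lemma adj_tree_edge dir D q :
  adj (pointer_tree dir D) (vtx (child dir q)) (parent D q).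
Proof.
rewrite /adj -tree_edgeE tree_edge_in andbT /parent; case: ifP => _; last by rewrite vtx_hubF.
by apply/eqP => /vtx_inj/eqP; apply/negP/child_neq.
Qed.

Section PointerTree.
Variables (dir : bool) (D : nat -> bool) (j : nat).
Hypotheses (jk : j < k) (D_j : ~~ D j).

Lemma pointer_tree_connected : connected_on U (pointer_tree dir D).
Proof.
pose e := adj (pointer_tree dir D).
have to_hub_from_child q : connect e (parent D q) h -> connect e (vtx (child dir q)) h.
  by apply: connect_trans; apply/connect1/adj_tree_edge.
have to_hub_iter d : connect e (vtx (iter d.+1 (child dir) j)) h.
  elim: d => [|d IH]; apply: to_hub_from_child.
    by rewrite /parent modn_small // (negbTE D_j).
  by rewrite /parent; case: ifP.
have to_hub x : x \in U -> connect e x h.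
  case/wheelP => [->|[p pk ->]]; first exact: connect0.
  by have [d <-] := vtx_iter_child dir jk pk.
move=> x y xU yU; apply: connect_trans (to_hub x xU) _.
by rewrite (sym_connect_sym (adj_sym _)); exact: to_hub.
Qed.

(* [steps p] is the number of [child dir]-steps from [child dir j] to [p]. *)
Definition steps p :=
  if dir then (if j < p then p - j.+1 else p + k - j.+1)
  else (if p < j then j.-1 - p else j + k.-1 - p).

Lemma steps_child q : q < k -> q != j -> steps (child dir q %% k) = (steps q).+1.
Proof.
move=> qk /eqP qj; rewrite /steps; case: dir => /=.
- case: (ltnP q.+1 k) => lt_qk; first rewrite modn_small //.
    by case: (ltnP j q.+1); case: (ltnP j q); lia.
  have -> : q.+1 = k by lia.
  by rewrite modnn; case: (ltnP j 0); case: (ltnP j q); lia.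
- case: (posnP q) => [q0 | q_gt0].
    rewrite q0 add0n modn_small; last by have := k_gt0; lia.
    by case: (ltnP k.-1 j); case: (ltnP 0 j); lia.
  have -> : q + k.-1 = q.-1 + k by have := k_gt0; lia.
  rewrite modnDr modn_small; last by lia.
  by case: (ltnP q.-1 j); case: (ltnP q j); lia.
Qed.

Definition depth (v : 'I_n) := if v == h then 0 else (steps (index v vs)).+1.

Lemma depth_vtx p : depth (vtx p) = (steps (p %% k)).+1.
Proof.
case/andP: uniq_wheel => _ uvs.
by rewrite /depth vtx_hubF /vtx index_uniq ?ltn_pmod ?k_gt0.
Qed.

Lemma depth_parent q : q < k -> depth (parent D q) < depth (vtx (child dir q)).
Proof.
move=> qk; rewrite /parent modn_small //; case: ifP => D_q.
  rewrite !depth_vtx (modn_small qk) steps_child //.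
  by apply: contraNneq D_j => <-; rewrite D_q.
by rewrite depth_vtx /depth eqxx.
Qed.

Lemma adj_pointer_tree y z : adj (pointer_tree dir D) y z -> exists2 q, q < k &
  (y = vtx (child dir q) /\ z = parent D q) \/ (y = parent D q /\ z = vtx (child dir q)).
Proof. by case/andP => _ /pointer_treeP [q qk]; rewrite tree_edgeE => /edge_eqP; exists q. Qed.

(* The deepest vertex of a cycle would need two distinct parents. *)
Lemma pointer_tree_acyclic : acyclic (pointer_tree dir D).
Proof.
move=> [s [size_s uniq_s cycle_s]].
have [y0 y0s] : exists y0, y0 \in s.
  by case: s size_s {uniq_s cycle_s} => // y0 s' _; exists y0; rewrite inE eqxx.
case: (arg_maxnP depth y0s) => y /= ys y_max.
have {}ys : y \in s := ys.
have to_parent z : z \in s -> adj (pointer_tree dir D) y z ->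
    exists2 q, q < k & y = vtx (child dir q) /\ z = parent D q.
  move=> zs /adj_pointer_tree [q qk [E|[Ey Ez]]]; first by exists q.
  by have /= := y_max z zs; rewrite Ey Ez leqNgt depth_parent.
have adj_prev : adj (pointer_tree dir D) y (prev s y).
  by rewrite adj_sym; exact: prev_cycle cycle_s ys.
have [q qk [Ey Enext]] := to_parent _ (etrans (mem_next s y) ys) (next_cycle cycle_s ys).
have [q' qk' [Ey' Eprev]] := to_parent _ (etrans (mem_prev s y) ys) adj_prev.
have Eq : q = q'.
  by move: Ey; rewrite Ey' => /vtx_inj/child_modK; rewrite !modn_small.
by have := next_neq_prev uniq_s size_s ys; rewrite Enext Eprev Eq eqxx.
Qed.

Lemma pointer_tree_spanning : spanning_tree U (pointer_tree dir D).
Proof.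
split; [| exact: pointer_tree_connected | exact: pointer_tree_acyclic].
move=> e /(subsetP (pointer_tree_sub dir D)) /wheel_edgeP [i _ [->|->]];
  by apply: edge_ends_in; rewrite ?hub_wheel ?vtx_wheel.
Qed.

End PointerTree.

Lemma pointer_tree_coupled (dir : bool) (D : nat -> bool) :
  (exists2 j, j < k & D j) -> (exists2 j, j < k & ~~ D j) ->
  coupled_tree h vs (pointer_tree dir D).
Proof.
move=> [j jk D_j] [j' jk' D_j']; split; first exact: pointer_tree_sub.
  exact: pointer_tree_spanning jk' D_j'.
by rewrite pointer_tree_compl; apply: (pointer_tree_spanning _ jk); rewrite negbK.
Qed.

Section CoupledTree.
Variable T : {set 'I_n * 'I_n}.
Hypothesis coupled_T : coupled_tree h vs T.

Local Notation rad i := (radius i \in T).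
Local Notation chd i := (chord i \in T).

Lemma coupled_sub : T \subset W. Proof. by case: coupled_T. Qed.

Lemma coupled_connected : connected_on U T.
Proof. by case: coupled_T => _ [_ ? _]. Qed.

Lemma coupled_compl_connected : connected_on U (W :\: T).
Proof. by case: coupled_T => _ _ [_ ? _]. Qed.

(* For [X = false] the arc is cut off in [T], for [X = true] in its complement. *)
Lemma no_uniform_arc (X : bool) i L : chd (i + k.-1) = X -> chd (i + L) = X ->
  (forall m, m <= L -> rad (i + m) = X) -> False.
Proof.
case: X => first_X last_X radii_X.
- apply: (@arc_disconnected (W :\: T) i L (subsetDl _ _) coupled_compl_connected);
    rewrite ?in_setD ?chord_wheel ?first_X ?last_X //.
  by move=> m mL; rewrite in_setD radius_wheel radii_X.
- apply: (@arc_disconnected T i L coupled_sub coupled_connected);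
    rewrite ?first_X ?last_X //.
  by move=> m mL; rewrite radii_X.
Qed.

Definition agree_prev i := rad i == chd (i + k.-1).
Definition agree_next i := rad i == chd i.

Lemma agree_prev_mod i : agree_prev (i %% k) = agree_prev i.
Proof.
by rewrite /agree_prev (radius_mod (modn_mod i k)) (chord_mod (modnD_eq _ (modn_mod i k))).
Qed.

Lemma agree_next_mod i : agree_next (i %% k) = agree_next i.
Proof. by rewrite /agree_next (radius_mod (modn_mod i k)) (chord_mod (modn_mod i k)). Qed.

Lemma agree_prev_nextF i : agree_prev i -> ~~ agree_next i.
Proof.
move=> /eqP a_i; apply/negP => /eqP b_i.
apply: (@no_uniform_arc (rad i) i 0); rewrite ?addn0 //.
by move=> m; rewrite leqn0 => /eqP ->; rewrite addn0.
Qed.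

Lemma agree_prev_next_gap i L : agree_prev i -> agree_next (i + L.+1) ->
  (forall m, 0 < m <= L -> ~~ agree_prev (i + m) && ~~ agree_next (i + m)) -> False.
Proof.
move=> a_i b_iL gap.
have chd_i : chd i = ~~ rad i.
  by have := agree_prev_nextF a_i; rewrite /agree_next; case: (rad i); case: (chd i).
have run : forall m, m <= L -> rad (i + m) = rad i /\ chd (i + m) = ~~ rad i.
  elim=> [|m IHm] mL; first by rewrite addn0.
  have [rad_m chd_m] := IHm (ltnW mL).
  have /andP [] := gap m.+1 mL; rewrite /agree_prev /agree_next addnS chord_pred_succ chd_m.
  by case: (rad _); case: (chd _); case: (rad i).
have [_ chd_L] := run L (leqnn L).
have rad_L : rad (i + L.+1) = rad i.
  have := contraL (@agree_prev_nextF _) b_iL.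
  rewrite /agree_prev addnS chord_pred_succ chd_L.
  by case: (rad _); case: (rad i).
apply: (@no_uniform_arc (rad i) i L.+1).
- by rewrite (eqP a_i).
- by move: b_iL => /eqP <-.
- move=> m; rewrite leq_eqVlt => /orP [/eqP -> // | mL].
  by case: (run m mL).
Qed.

Lemma agree_prev_nextF_far L i : agree_prev i -> ~~ agree_next (i + L.+1).
Proof.
elim/ltn_ind: L i => L IH i a_i; apply/negP => b_iL.
case: (boolP [exists m : 'I_L.+1, (0 < m) && (agree_prev (i + m) || agree_next (i + m))]).
  case/existsP => -[m /= mL] /andP [m0 /orP [a_m | b_m]].
    have lt_Lm : L - m < L by lia.
    have := IH _ lt_Lm _ a_m; have -> : i + m + (L - m).+1 = i + L.+1 by lia.
    by rewrite b_iL.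
  have lt_m : m.-1 < L by lia.
  by have := IH _ lt_m i a_i; rewrite prednK // b_m.
move/existsPn => gap; apply: (agree_prev_next_gap a_i b_iL) => m /andP [m0 mL].
by have := gap (Ordinal (mL : m < L.+1)); rewrite /= m0 negb_or.
Qed.

Lemma coupled_tree_oriented :
  exists dir, forall q, rad (child dir q) != chd (child_chord dir q).
Proof.
case: (boolP [exists q : 'I_k, agree_prev q]) => [/existsP [q a_q] | /existsPn no_a].
- exists false => j /=; apply/negP => /eqP b_j.
  have : agree_next ((j + k.-1) %% k + k).
    by rewrite -agree_next_mod modnDr modn_mod agree_next_mod /agree_next b_j.
  have -> : (j + k.-1) %% k + k = q + ((j + k.-1) %% k + k - q).-1.+1.
    by have := ltn_ord q; lia.
  by apply/negP/agree_prev_nextF_far.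
- exists true => q /=.
  have := no_a (Ordinal (ltn_pmod q.+1 k_gt0)).
  by rewrite /= agree_prev_mod /agree_prev chord_pred_succ.
Qed.

Lemma coupled_tree_pointer : exists dir D,
  [/\ T = pointer_tree dir D, (exists2 j, j < k & D j) & (exists2 j, j < k & ~~ D j)].
Proof.
have [dir oriented] := coupled_tree_oriented.
pose D q := chd (child_chord dir q).
have radius_T i : rad i = ~~ D (pair_of_radius dir i).
  have := oriented (pair_of_radius dir i).
  by rewrite /D (radius_mod (child_pair_of_radius dir i)); case: (rad i); case: (chd _).
have chord_T i : chd i = D (pair_of_chord dir i).
  by rewrite /D (chord_mod (child_chord_pair_of_chord dir i)).
have T_pointer : T = pointer_tree dir D.
  apply/setP => e; case eW: (e \in W); last first.
    rewrite (negbTE (contraFN (subsetP coupled_sub e) eW)).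
    by rewrite (negbTE (contraFN (subsetP (pointer_tree_sub dir D) e) eW)).
  by case/wheel_edgeP: eW => i _ [->|->]; rewrite ?radius_pointer_tree ?chord_pointer_tree.
exists dir, D; split => //.
- have [i _ i_out] := connected_radius (subsetDl W T) coupled_compl_connected.
  exists (pair_of_radius dir i); first exact: pair_of_radius_lt.
  by move: i_out; rewrite in_setD radius_T negbK => /andP [].
- have [i _ i_in] := connected_radius coupled_sub coupled_connected.
  by exists (pair_of_radius dir i); rewrite ?pair_of_radius_lt // -radius_T.
Qed.
End CoupledTree.

Section BetterChoice.
Variables (dir : bool) (D D' : nat -> bool).
Hypothesis D'_better : forall q, q < k -> D q != D' q -> D' q = (vtx q < h).

Lemma tree_edge_better q : q < k -> D q != D' q ->
  edge_gt (tree_edge dir D' q) (tree_edge dir D q).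
Proof.
move=> qk neq_q; have better := D'_better qk neq_q.
have child_neq : vtx (child dir q) != vtx q.
  by apply/eqP => /vtx_inj/eqP; apply/negP/child_neq.
rewrite !tree_edgeE /parent modn_small //.
move: neq_q better; case: (D q); case: (D' q) => // _ lt_qh.
- apply: edge_gt_common_end; rewrite ?vtx_hubF //.
  by rewrite ltn_neqAle leqNgt -lt_qh andbT (inj_eq (@ord_inj n)) eq_sym vtx_hubF.
- by apply: edge_gt_common_end; rewrite ?vtx_hubF // -lt_qh.
Qed.

Lemma better_tree_in q : q < k -> D q != D' q ->
  tree_edge dir D' q \in pointer_tree dir D' :\: pointer_tree dir D.
Proof.
move=> qk neq_q; rewrite in_setD tree_edge_in andbT.
apply/negP => /pointer_treeP [q' qk' /(tree_edge_inj qk qk') [<- /eqP]].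
by rewrite eq_sym (negbTE neq_q).
Qed.

Lemma pointer_tree_better q0 : q0 < k -> D q0 != D' q0 ->
  eset_gt (pointer_tree dir D') (pointer_tree dir D).
Proof.
move=> q0k neq_q0; rewrite /eset_gt !card_pointer_tree ltnn eqxx /=.
case: (arg_minnP (@edge_rank n) (better_tree_in q0k neq_q0)) => e e_in e_min.
apply/existsP; exists e; apply/andP; split => //; apply/forallP => f; apply/implyP.
rewrite in_setD => /andP [f_out /pointer_treeP [q qk Ef]].
have neq_q : D q != D' q.
  apply: contra f_out => /eqP eq_q.
  have -> : f = tree_edge dir D' q by rewrite Ef /tree_edge modn_small // eq_q.
  exact: tree_edge_in.
rewrite edge_gtE; apply: leq_ltn_trans (e_min _ (better_tree_in qk neq_q)) _.
by rewrite -edge_gtE Ef; exact: tree_edge_better.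
Qed.

End BetterChoice.

(* Otherwise [pointer_tree dir D'] would be a coupled tree larger than [T]. *)
Lemma leading_pointer_tree T dir D (D' : nat -> bool) :
  leading_tree h vs T -> T = pointer_tree dir D ->
  (exists2 j, j < k & D' j) -> (exists2 j, j < k & ~~ D' j) ->
  (forall q, q < k -> D q != D' q -> D' q = (vtx q < h)) ->
  forall q, q < k -> D q = D' q.
Proof.
move=> [_ leading] T_eq D'_some D'_not better q qk.
apply/eqP/negPn/negP => neq_q; rewrite {}T_eq in leading.
have neq_trees : pointer_tree dir D' != pointer_tree dir D.
  by apply/eqP => E; move: (better_tree_in dir qk neq_q); rewrite E setDv inE.
have := leading _ (pointer_tree_coupled dir D'_some D'_not) neq_trees.
by apply/negP/eset_gt_asym/(pointer_tree_better dir better qk).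
Qed.

Lemma eq_pointer_tree dir D D' :
  {in gtn k, D =1 D'} -> pointer_tree dir D = pointer_tree dir D'.
Proof. by move=> eqD; apply: eq_imset => q; rewrite /tree_edge eqD //; exact: ltn_pmod k_gt0. Qed.

Lemma exists_other j : j < k -> exists2 j', j' < k & j' != j.
Proof.
move=> jk; exists (j.+1 %% k); first exact: ltn_pmod k_gt0.
by rewrite -{2}(modn_small jk) -addn1 modnD_neq //; have := size_vs; lia.
Qed.

Section Leading.
Variable T : {set 'I_n * 'I_n}.
Hypothesis leading_T : leading_tree h vs T.

Lemma leading_tree_hub_min : (forall v, v \in U -> h <= v) ->
  exists dir, exists2 j, j < k & T = pointer_tree dir (pred1 j).
Proof.
move=> hub_min; have [dir [D [T_eq [j jk D_j] _]]] := coupled_tree_pointer leading_T.1.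
exists dir, j => //; rewrite T_eq; apply: eq_pointer_tree => q qk.
apply: (leading_pointer_tree leading_T T_eq) => //.
- by exists j; rewrite /= ?eqxx.
- by have [j' j'k j'j] := exists_other jk; exists j'.
- move=> {}q {}qk /=; case: (q =P j) => [-> | _]; first by rewrite D_j eqxx.
  by move=> _; apply/esym/negbTE; rewrite -leqNgt; exact: hub_min (vtx_wheel q).
Qed.

Lemma leading_tree_hub_max : (forall v, v \in U -> v <= h) ->
  exists dir, exists2 j, j < k & T = pointer_tree dir (predC1 j).
Proof.
move=> hub_max; have [dir [D [T_eq _ [j jk D_j]]]] := coupled_tree_pointer leading_T.1.
exists dir, j => //; rewrite T_eq; apply: eq_pointer_tree => q qk.
apply: (leading_pointer_tree leading_T T_eq) => //.
- by have [j' j'k j'j] := exists_other jk; exists j'.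
- by exists j; rewrite /= ?eqxx.
- move=> {}q {}qk /=; case: (q =P j) => [-> | _]; first by rewrite (negbTE D_j) eqxx.
  move=> _; apply/esym; rewrite ltn_neqAle hub_max ?vtx_wheel // andbT.
  by rewrite (inj_eq (@ord_inj n)) vtx_hubF.
Qed.

Lemma leading_tree_hub_mid : (exists2 a, a \in vs & a < h) -> (exists2 b, b \in vs & h < b) ->
  exists dir, T = pointer_tree dir (fun q => vtx q < h).
Proof.
move=> [a a_vs a_lt] [b b_vs b_gt].
have [dir [D [T_eq _ _]]] := coupled_tree_pointer leading_T.1.
exists dir; rewrite T_eq; apply: eq_pointer_tree => q qk.
apply: (@leading_pointer_tree T dir D (fun q => vtx q < h) leading_T T_eq) => //.
- by have [i ik Ea] := vsP a_vs; exists i; rewrite // -Ea.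
- by have [i ik Eb] := vsP b_vs; exists i; rewrite // -Eb -leqNgt ltnW.
Qed.

End Leading.

Lemma card_wheel_vertices_ge :
  #|[set v in U | h <= v]| = #|[set q : 'I_k | h <= vtx q]|.+1.
Proof.
have -> : [set v in U | h <= v] =
    h |: [set vtx (nat_of_ord q) | q in [set q : 'I_k | h <= vtx q]].
  apply/setP => v; rewrite !inE; case: (v =P h) => [-> | v_h] /=; first by rewrite leqnn.
  apply/andP/imsetP => [[/vsP [q qk ->] le_hq] | [q]]; first by exists (Ordinal qk); rewrite ?inE.
  by rewrite inE => le_hq ->; rewrite vtx_in.
rewrite cardsU1 card_in_imset.
  suff -> : h \notin [set vtx (nat_of_ord q) | q in [set q : 'I_k | h <= vtx q]] by [].
  by apply/imsetP => -[q _ /esym/eqP]; rewrite vtx_hubF.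
by move=> x y _ _ /vtx_inj; rewrite !modn_small // => /val_inj.
Qed.

Lemma valency_hub_pred1 dir j : j < k -> valency (pointer_tree dir (pred1 j)) h = k.-1.
Proof.
move=> jk; have := cardsC1 (Ordinal jk); rewrite card_ord valency_hub_pointer_tree => <-.
by apply: eq_card => q; rewrite !inE -(inj_eq val_inj).
Qed.

Lemma valency_hub_predC1 dir j : j < k -> valency (pointer_tree dir (predC1 j)) h = 1.
Proof.
move=> jk; rewrite valency_hub_pointer_tree -(cards1 (Ordinal jk)).
by apply: eq_card => q; rewrite !inE negbK -(inj_eq val_inj).
Qed.

End Wheel.

Theorem proposition4p1 (n : nat) (v0 : 'I_n) (vs : seq 'I_n) (T : {set 'I_n * 'I_n}) :
  3 <= size vs -> uniq (v0 :: vs) ->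
  leading_tree v0 vs T ->
  [/\ (forall v, v \in wheel_vertices v0 vs -> v0 <= v) ->
        valency T v0 = (size vs).-1,
      (forall v, v \in wheel_vertices v0 vs -> v <= v0) ->
        valency T v0 = 1 &
      (exists2 a, a \in vs & a < v0) -> (exists2 b, b \in vs & v0 < b) ->
        (forall i, i < size vs ->
           (v0 < nth v0 vs i -> valency T (nth v0 vs i) = 1) /\
           (nth v0 vs i < v0 -> valency T (nth v0 vs i) = 2)) /\
        (forall r, r = #|[set v in wheel_vertices v0 vs | v0 <= v]| ->
           valency T v0 = r - 1)].
Proof.
move=> size_vs uniq_wheel leading_T; split.
- case/(leading_tree_hub_min size_vs uniq_wheel leading_T) => dir [j jk ->].
  exact: valency_hub_pred1.
- case/(leading_tree_hub_max size_vs uniq_wheel leading_T) => dir [j jk ->].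
  exact: valency_hub_predC1.
- move=> has_lt has_gt.
  have [dir ->] := leading_tree_hub_mid size_vs uniq_wheel leading_T has_lt has_gt.
  split=> [i ik | r ->].
  + have <- : vtx v0 vs i = nth v0 vs i by rewrite /vtx modn_small.
    rewrite valency_vtx_pointer_tree // modn_small //.
    by split=> lt; [rewrite ltnNge (ltnW lt) | rewrite lt].
  + (* Restated so that the set is elaborated exactly as in the goal. *)
    have card_ge : #|[set v in wheel_vertices v0 vs | v0 <= v]| = _ :=
      card_wheel_vertices_ge size_vs uniq_wheel.
    rewrite valency_hub_pointer_tree // card_ge subn1 /=.
    by apply: eq_card => q; rewrite !inE ltnNge negbK.
Qed.
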